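(* Let $\Lambda$ be a consistent normal modal logic, let $M\subseteq\{\Diamond,\Box\}$, and let $C$ be a Boolean clone. (1) If $\Lambda$ is of Type A, then $\mathsf{Clos}^\Lambda_M(C)=C$. (2) If $\Lambda$ is of Type B, then $\mathsf{Clos}^\Lambda_M(C)$ equals $C$ if $M=\emptyset$, $C\sqcup\{\bot\}$ if $M=\{\Diamond\}$, $C\sqcup\{\top\}$ if $M=\{\Box\}$, and $C\sqcup\{\top,\bot\}$ if $M=\{\Diamond,\Box\}$. (3) If $\Lambda$ is of Type C, then $C\subseteq\mathsf{Clos}^\Lambda_M(C)\subseteq D$, where $D$ is $C$ if $M=\emptyset$, $C\sqcup\{\bot\}$ if $M=\{\Diamond\}$, $C\sqcup\{\top\}$ if $M=\{\Box\}$, and $C\sqcup\{\top,\bot\}$ if $M=\{\Diamond,\Box\}$.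
   Context: Modal formulas: $\phi::=x\mid\neg\phi\mid\phi\land\psi\mid\phi\lor\psi\mid\Diamond\phi\mid\Box\phi$. A normal modal logic is a set of modal formulas containing all propositional tautologies, the K axiom and $\Diamond\phi\leftrightarrow\neg\Box\neg\phi$, closed under modus ponens, uniform substitution and necessitation; $\Lambda\vdash\phi$ means $\phi\in\Lambda$. $F_\circ$ ($F_\bullet$) is the one-world frame with a reflexive (irreflexive) world. $\Lambda$ is of Type A if $F_\circ\models\Lambda$; of Type B if $F_\bullet\models\Lambda$ and $\Lambda\vdash\Box^n\bot$ for some $n\ge1$; of Type C if $F_\bullet\models\Lambda$, $\Lambda\not\vdash\Box^n\bot$ for all $n\ge1$, and $\Lambda\vdash\bigvee_{k\le n}\Diamond^k\Box\bot$ for some $n\ge1$. A Boolean function is a map $\{0,1\}^n\to\{0,1\}$ with $n\ge1$ (constants $\top,\bot$ are constant unary functions); a Boolean clone is a set of Boolean functions containing all projections and closed under composition; for sets $C,X$ of Boolean functions, $C\sqcup X$ is the Boolean clone generated by $C\cup X$. For each Boolean function $f$ fix a propositional formula $\phi_f$ defining it. For a set $\Phi$ of modal formulas, $\mathrm{ML}_\Phi$ is the smallest set containing all variables and containing $\oplus_\phi(\psi_1,\dots,\psi_n)$ whenever $\phi(x_1,\dots,x_n)\in\Phi$ and $\psi_i\in\mathrm{ML}_\Phi$; such a formula is identified with the ordinary modal formula obtained by recursively substituting $\psi_i$ for $x_i$ in $\phi$. $\mathrm{ML}_{M\cup O}$ denotes $\mathrm{ML}_\Phi$ where $\Phi$ consists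 of $\Diamond x$ (if $\Diamond\in M$), $\Box x$ (if $\Box\in M$) and $\phi_f$ for $f\in O$. $\mathsf{Clos}^\Lambda_M(O)$ is the set of Boolean functions $f$ such that $\Lambda\vdash\phi_f\leftrightarrow\phi$ for some $\phi\in\mathrm{ML}_{M\cup O}$. *)

From mathcomp Require Import all_boot.
Set Implicit Arguments. Unset Strict Implicit. Unset Printing Implicit Defensive.

(* Variables x_1, x_2, ... are encoded as Var 0, Var 1, ... *)
Inductive form : Type :=
| Var : nat -> form
| Neg : form -> form
| And : form -> form -> form
| Or  : form -> form -> form
| Dia : form -> form
| Box : form -> form.

Definition Imp (a b : form) : form := Or (Neg a) b.
Definition Iff (a b : form) : form := And (Imp a b) (Imp b a).
Definition FBot : form := And (Var 0) (Neg (Var 0)).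

Fixpoint subst (s : nat -> form) (p : form) : form :=
  match p with
  | Var x => s x
  | Neg a => Neg (subst s a)
  | And a b => And (subst s a) (subst s b)
  | Or a b => Or (subst s a) (subst s b)
  | Dia a => Dia (subst s a)
  | Box a => Box (subst s a)
  end.

(* Evaluation treating variables and modal subformulas as propositional atoms;
   a formula is a propositional tautology (i.e. a substitution instance of a
   classical tautology) iff it is true under every such assignment. *)
Fixpoint teval (v : form -> bool) (p : form) : bool :=
  match p with
  | Var x => v (Var x)
  | Neg a => ~~ teval v a
  | And a b => teval v a && teval v b
  | Or a b => teval v a || teval v b
  | Dia a => v (Dia a)
  | Box a => v (Box a)
  end.

Definition tautology (p : form) : Prop := forall v, teval v p.

Definition normal_logic (L : form -> Prop) : Prop :=
  (forall p, tautology p -> L p) /\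
  [/\ L (Imp (Box (Imp (Var 0) (Var 1))) (Imp (Box (Var 0)) (Box (Var 1)))),
      L (Iff (Dia (Var 0)) (Neg (Box (Neg (Var 0))))),
      (forall p q, L (Imp p q) -> L p -> L q),
      (forall s p, L p -> L (subst s p)) &
      (forall p, L p -> L (Box p))].

Definition consistent (L : form -> Prop) : Prop := exists p, ~ L p.

Fixpoint sat (W : Type) (R : W -> W -> Prop) (V : nat -> W -> Prop)
    (w : W) (p : form) : Prop :=
  match p with
  | Var x => V x w
  | Neg a => ~ sat R V w a
  | And a b => sat R V w a /\ sat R V w b
  | Or a b => sat R V w a \/ sat R V w b
  | Dia a => exists w', R w w' /\ sat R V w' a
  | Box a => forall w', R w w' -> sat R V w' a
  end.

Definition frame_validates (W : Type) (R : W -> W -> Prop) (L : form -> Prop) :=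
  forall p, L p -> forall V w, sat R V w p.

Definition R_circ : unit -> unit -> Prop := fun _ _ => True.
Definition R_bullet : unit -> unit -> Prop := fun _ _ => False.

Fixpoint box_iter (n : nat) (p : form) : form :=
  if n is n'.+1 then Box (box_iter n' p) else p.
Fixpoint dia_iter (n : nat) (p : form) : form :=
  if n is n'.+1 then Dia (dia_iter n' p) else p.

Fixpoint big_dia_boxbot (n : nat) : form :=
  match n with
  | 0 => Box FBot
  | n'.+1 => Or (big_dia_boxbot n') (dia_iter n (Box FBot))
  end.

Definition typeA (L : form -> Prop) : Prop := frame_validates R_circ L.
Definition typeB (L : form -> Prop) : Prop :=
  frame_validates R_bullet L /\ exists n, 0 < n /\ L (box_iter n FBot).
Definition typeC (L : form -> Prop) : Prop :=
  [/\ frame_validates R_bullet L,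
      (forall n, 0 < n -> ~ L (box_iter n FBot)) &
      exists n, 0 < n /\ L (big_dia_boxbot n)].

Record BF := mkBF {
  bf_ar : nat;
  bf_fun : {ffun {ffun 'I_bf_ar -> bool} -> bool};
  bf_pos : 0 < bf_ar }.

Definition bset := BF -> Prop.

Definition proj (n : nat) (hn : 0 < n) (i : 'I_n) : BF :=
  @mkBF n [ffun x : {ffun 'I_n -> bool} => x i] hn.

Definition compose (f : BF) (m : nat) (hm : 0 < m)
    (g : 'I_(bf_ar f) -> {ffun {ffun 'I_m -> bool} -> bool}) : BF :=
  @mkBF m [ffun x : {ffun 'I_m -> bool} => bf_fun f [ffun i => g i x]] hm.

Definition clone (C : bset) : Prop :=
  (forall n (hn : 0 < n) (i : 'I_n), C (proj hn i)) /\
  (forall f m (hm : 0 < m) (g : 'I_(bf_ar f) -> {ffun {ffun 'I_m -> bool} -> bool}),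
     C f -> (forall i, C (@mkBF m (g i) hm)) -> C (compose hm g)).

Definition gen_clone (S : bset) : bset :=
  fun f => forall D, clone D -> (forall g, S g -> D g) -> D f.

Definition join (C X : bset) : bset := gen_clone (fun f => C f \/ X f).

Definition bf_top : BF := @mkBF 1 [ffun _ => true] isT.
Definition bf_bot : BF := @mkBF 1 [ffun _ => false] isT.

Fixpoint modal_free (p : form) : bool :=
  match p with
  | Var _ => true
  | Neg a => modal_free a
  | And a b | Or a b => modal_free a && modal_free b
  | Dia _ | Box _ => false
  end.

Fixpoint vars_below (n : nat) (p : form) : bool :=
  match p with
  | Var x => x < n
  | Neg a | Dia a | Box a => vars_below n a
  | And a b | Or a b => vars_below n a && vars_below n b
  end.

Fixpoint peval (v : nat -> bool) (p : form) : bool :=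
  match p with
  | Var x => v x
  | Neg a => ~~ peval v a
  | And a b => peval v a && peval v b
  | Or a b => peval v a || peval v b
  | Dia a => false
  | Box a => false
  end.

Definition defining (phi : BF -> form) : Prop :=
  forall f, [/\ modal_free (phi f), vars_below (bf_ar f) (phi f) &
             forall v : nat -> bool,
               peval v (phi f) = bf_fun f [ffun i => v (nat_of_ord i)]].

Definition args_subst (n : nat) (psi : 'I_n -> form) : nat -> form :=
  fun k => match insub k with Some i => psi i | None => Var k end.

(* ML_{M u O}; M is given by two booleans (Dia in M, Box in M) *)
Inductive ML (hasDia hasBox : bool) (O : bset) (phi : BF -> form) : form -> Prop :=
| ML_var x : ML hasDia hasBox O phi (Var x)
| ML_dia p : hasDia -> ML hasDia hasBox O phi p ->
             ML hasDia hasBox O phi (subst (fun _ => p) (Dia (Var 0)))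
| ML_box p : hasBox -> ML hasDia hasBox O phi p ->
             ML hasDia hasBox O phi (subst (fun _ => p) (Box (Var 0)))
| ML_op f (psi : 'I_(bf_ar f) -> form) : O f ->
             (forall i, ML hasDia hasBox O phi (psi i)) ->
             ML hasDia hasBox O phi (subst (args_subst psi) (phi f)).

Definition Clos (L : form -> Prop) (hasDia hasBox : bool) (phi : BF -> form)
    (O : bset) : bset :=
  fun f => exists p, ML hasDia hasBox O phi p /\ L (Iff (phi f) p).

Definition Dset (hasDia hasBox : bool) (C : bset) : bset :=
  match hasDia, hasBox with
  | false, false => C
  | true, false => join C (fun f => f = bf_bot)
  | false, true => join C (fun f => f = bf_top)
  | true, true => join C (fun f => f = bf_top \/ f = bf_bot)
  end.

From mathcomp Require Import all_boot.
Set Implicit Arguments. Unset Strict Implicit. Unset Printing Implicit Defensive.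

(* Lower bounds: in any normal logic Clos is a clone, since L-equivalent
   formulas may be substituted for each other; it contains C through the
   formulas phi_f(x_1, ..., x_n); and if L |- []^n bot, then []^n x and <>^n x
   are L-equivalent to top and bot.
   Upper bounds: a one-world frame validating L collapses every formula to a
   Boolean function.  On the reflexive world [] and <> are the identity, on the
   irreflexive one []a is true and <>a is false, so a formula of ML_{M u C}
   defines a function of C, resp. of C joined with the constants that M makes
   available; and f in Clos equals that function, because L-equivalent formulas
   agree on a frame validating L. *)

Ltac truth_table :=
  let v := fresh "v" in
  move=> v /=;
  repeat match goal with
  | |- context [teval v ?a] => case: (teval v a)
  | |- context [v ?a] => case: (v a)
  end.

Definition prop_hom (e : form -> bool) : Prop :=
  forall a b, [/\ e (Neg a) = ~~ e a, e (And a b) = e a && e b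
                & e (Or a b) = e a || e b].

Lemma subst_var p : subst Var p = p.
Proof. by elim: p => //= [a ->|a -> b ->|a -> b ->|a ->|a ->]. Qed.

Lemma subst_comp s t p : subst s (subst t p) = subst (fun k => subst s (t k)) p.
Proof. by elim: p => //= [a ->|a -> b ->|a -> b ->|a ->|a ->]. Qed.

Lemma eq_subst_vars_below n s t p : vars_below n p ->
  (forall k, k < n -> s k = t k) -> subst s p = subst t p.
Proof.
move=> + st; elim: p => /= [k /st //|a IH /IH ->|a IHa b IHb /andP[/IHa -> /IHb ->]
  |a IHa b IHb /andP[/IHa -> /IHb ->]|a IH /IH ->|a IH /IH ->] //.
Qed.

Lemma prop_hom_subst e s p : prop_hom e -> modal_free p ->
  e (subst s p) = peval (fun k => e (s k)) p.
Proof.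
move=> hom; elim: p => //= [a IH|a IHa b IHb|a IHa b IHb].
- by case: (hom (subst s a) (subst s a)) => -> _ _ /IH ->.
- by case: (hom (subst s a) (subst s b)) => _ -> _ /andP[/IHa -> /IHb ->].
- by case: (hom (subst s a) (subst s b)) => _ _ -> /andP[/IHa -> /IHb ->].
Qed.

Lemma taut_iff a b : (forall v, teval v a = teval v b) -> tautology (Iff a b).
Proof. by move=> ab v /=; rewrite ab; case: (teval v b). Qed.

Lemma args_substE n (psi : 'I_n -> form) (i : 'I_n) : args_subst psi i = psi i.
Proof. by rewrite /args_subst valK. Qed.

Section DefiningFormulas.

Variable phi : BF -> form.
Hypothesis phi_def : defining phi.

Lemma defining_subst e s f : prop_hom e ->
  e (subst s (phi f)) = bf_fun f [ffun i : 'I_(bf_ar f) => e (s i)].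
Proof.
by case: (phi_def f) => mf _ ev hom; rewrite prop_hom_subst // ev.
Qed.

Lemma defining_eval e f : prop_hom e ->
  e (phi f) = bf_fun f [ffun i : 'I_(bf_ar f) => e (Var i)].
Proof. by move=> hom; rewrite -[phi f]subst_var defining_subst. Qed.

Lemma defining_args_subst e f (psi : 'I_(bf_ar f) -> form) : prop_hom e ->
  e (subst (args_subst psi) (phi f)) = bf_fun f [ffun i => e (psi i)].
Proof.
by move=> hom; rewrite defining_subst //; congr (bf_fun f _); apply/ffunP => i;
  rewrite !ffunE args_substE.
Qed.

End DefiningFormulas.

Definition point_frame (refl : bool) : unit -> unit -> Prop :=
  if refl then R_circ else R_bullet.

Fixpoint eval_point (refl : bool) (v : nat -> bool) (p : form) : bool :=
  match p with
  | Var x => v x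
  | Neg a => ~~ eval_point refl v a
  | And a b => eval_point refl v a && eval_point refl v b
  | Or a b => eval_point refl v a || eval_point refl v b
  | Dia a => refl && eval_point refl v a
  | Box a => ~~ refl || eval_point refl v a
  end.

Lemma sat_point refl (v : nat -> bool) p :
  sat (point_frame refl) (fun k _ => v k) tt p <-> eval_point refl v p.
Proof.
elim: p => [k|a IH|a IHa b IHb|a IHa b IHb|a IH|a IH] /=.
- by [].
- by split=> [na|/negP na /IH //]; apply/negP => /IH.
- by split=> [[/IHa -> /IHb ->]|/andP[/IHa ? /IHb ?]].
- by split=> [[/IHa ->|/IHb ->]|/orP[/IHa|/IHb]]; rewrite ?orbT //; [left|right].
- case: refl IH => IH /=; last by split=> [[? []]|].
  by split=> [[[] [_ /IH]] //|/IH ?]; exists tt.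
- case: refl IH => IH /=; last by split=> // _ [] [].
  by split=> [H|/IH ? [] _ //]; apply/IH; exact: H.
Qed.

Lemma point_frame_iff refl L a b : frame_validates (point_frame refl) L ->
  L (Iff a b) -> forall v, eval_point refl v a = eval_point refl v b.
Proof.
move=> valid /(valid _) Lab v; have /= [ab ba] := Lab (fun k _ => v k) tt.
apply/idP/idP => /sat_point h; apply/sat_point; [by case: ab|by case: ba].
Qed.

Section NormalLogic.

Variable L : form -> Prop.
Hypothesis L_normal : normal_logic L.

Lemma L_taut p : tautology p -> L p.
Proof. by case: L_normal => taut _; apply: taut. Qed.

Lemma L_mp p q : L (Imp p q) -> L p -> L q.
Proof. by case: L_normal => _ [_ _ mp _ _]; apply: mp. Qed.

Lemma L_subst s p : L p -> L (subst s p).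
Proof. by case: L_normal => _ [_ _ _ us _]; apply: us. Qed.

Lemma L_nec p : L p -> L (Box p).
Proof. by case: L_normal => _ [_ _ _ _ nec]; apply: nec. Qed.

Lemma L_K a b : L (Imp (Box (Imp a b)) (Imp (Box a) (Box b))).
Proof.
case: L_normal => _ [K _ _ _ _].
exact: (L_subst (fun k => if k == 0 then a else b) K).
Qed.

Lemma L_dual a : L (Iff (Dia a) (Neg (Box (Neg a)))).
Proof. by case: L_normal => _ [_ D _ _ _]; exact: (L_subst (fun _ => a) D). Qed.

Lemma L_taut_mp a b : tautology (Imp a b) -> L a -> L b.
Proof. by move/L_taut; apply: L_mp. Qed.

Lemma L_taut_mp2 a b c : tautology (Imp a (Imp b c)) -> L a -> L b -> L c.
Proof. by move=> abc /(L_taut_mp abc); apply: L_mp. Qed.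

Lemma L_iff_refl a : L (Iff a a).
Proof. by apply: L_taut; truth_table. Qed.

Lemma L_iff_sym a b : L (Iff a b) -> L (Iff b a).
Proof. by apply: L_taut_mp; truth_table. Qed.

Lemma L_iff_trans a b c : L (Iff a b) -> L (Iff b c) -> L (Iff a c).
Proof. by apply: L_taut_mp2; truth_table. Qed.

Lemma L_iff_provable a b : L a -> L b -> L (Iff a b).
Proof. by apply: L_taut_mp2; truth_table. Qed.

Lemma L_iff_refutable a b : L (Neg a) -> L (Neg b) -> L (Iff a b).
Proof. by apply: L_taut_mp2; truth_table. Qed.

Lemma L_box_mono a b : L (Imp a b) -> L (Imp (Box a) (Box b)).
Proof. by move/L_nec; apply: L_mp; apply: L_K. Qed.

Lemma L_box_iter_mono n a b : L (Imp a b) -> L (Imp (box_iter n a) (box_iter n b)).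
Proof. by move=> ab; elim: n => //= n; apply: L_box_mono. Qed.

Lemma L_box_cong a b : L (Iff a b) -> L (Iff (Box a) (Box b)).
Proof.
move=> ab; have ab' : L (Imp a b) by apply: L_taut_mp ab; truth_table.
have ba' : L (Imp b a) by apply: L_taut_mp ab; truth_table.
by apply: L_taut_mp2 (L_box_mono ab') (L_box_mono ba'); truth_table.
Qed.

Lemma L_neg_cong a b : L (Iff a b) -> L (Iff (Neg a) (Neg b)).
Proof. by apply: L_taut_mp; truth_table. Qed.

Lemma L_dia_cong a b : L (Iff a b) -> L (Iff (Dia a) (Dia b)).
Proof.
move=> ab; apply: L_iff_trans (L_dual a) _.
apply: L_iff_trans _ (L_iff_sym (L_dual b)).
by apply/L_neg_cong/L_box_cong/L_neg_cong.
Qed.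

Lemma L_subst_iff s t r : (forall k, L (Iff (s k) (t k))) ->
  L (Iff (subst s r) (subst t r)).
Proof.
move=> st; elim: r => /= [k|a|a IHa b IHb|a IHa b IHb|a|a].
- exact: st.
- exact: L_neg_cong.
- by apply: L_taut_mp2 IHa IHb; truth_table.
- by apply: L_taut_mp2 IHa IHb; truth_table.
- exact: L_dia_cong.
- exact: L_box_cong.
Qed.

Lemma L_box_iter_neg_dia n a : L (Imp (box_iter n (Neg a)) (Neg (dia_iter n a))).
Proof.
elim: n => /= [|n IH]; first by apply: L_taut; truth_table.
by apply: L_taut_mp2 (L_box_mono IH) (L_dual (dia_iter n a)); truth_table.
Qed.

Section BoxIterBot.

Variable n : nat.
Hypothesis L_box_iter_bot : L (box_iter n FBot).

Lemma L_box_iter_of_bot a : L (box_iter n a).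
Proof. by apply: L_mp L_box_iter_bot; apply/L_box_iter_mono/L_taut; truth_table. Qed.

Lemma L_neg_dia_iter_of_bot a : L (Neg (dia_iter n a)).
Proof. exact: L_mp (L_box_iter_neg_dia n a) (L_box_iter_of_bot _). Qed.

End BoxIterBot.

End NormalLogic.

Section ModalClosure.

Variables (hasDia hasBox : bool) (O : bset) (phi : BF -> form).
Local Notation ML := (ML hasDia hasBox O phi).

Lemma ML_subst p s : defining phi -> ML p -> (forall k, ML (s k)) -> ML (subst s p).
Proof.
move=> phi_def MLp; elim: MLp s => [x|q h _ IH|q h _ IH|f psi Of _ IH] s MLs /=.
- exact: MLs.
- exact: ML_dia h (IH s MLs).
- exact: ML_box h (IH s MLs).
- have [_ vb _] := phi_def f.
  rewrite subst_comp
    (eq_subst_vars_below (t := args_subst (fun i => subst s (psi i))) vb).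
    exact: ML_op Of (fun i => IH i s MLs).
  by move=> k lt_kn; rewrite /args_subst; case: insubP => // /negP.
Qed.

Lemma ML_box_iter n p : hasBox -> ML p -> ML (box_iter n p).
Proof. by move=> h MLp; elim: n => //= n; apply: ML_box h. Qed.

Lemma ML_dia_iter n p : hasDia -> ML p -> ML (dia_iter n p).
Proof. by move=> h MLp; elim: n => //= n; apply: ML_dia h. Qed.

End ModalClosure.

Lemma mkBF_ext n (F G : {ffun {ffun 'I_n -> bool} -> bool}) (hn : 0 < n) :
  (forall x, F x = G x) -> mkBF F hn = mkBF G hn.
Proof. by move=> FG; congr mkBF; apply/ffunP. Qed.

Lemma clone_const (D : bset) (b : bool) n (hn : 0 < n) : clone D ->
  D (@mkBF 1 [ffun _ => b] isT) -> D (mkBF [ffun _ : {ffun 'I_n -> bool} => b] hn).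
Proof.
move=> [proj_D comp_D] Db.
have := comp_D _ n hn (fun _ => [ffun x : {ffun 'I_n -> bool} => x (Ordinal hn)]) Db
  (fun _ => proj_D n hn (Ordinal hn)).
by congr D; apply: mkBF_ext => x; rewrite !ffunE.
Qed.

Section LowerBound.

Variables (L : form -> Prop) (phi : BF -> form) (hasDia hasBox : bool) (C : bset).
Hypotheses (L_normal : normal_logic L) (phi_def : defining phi).
Local Notation Clos := (Clos L hasDia hasBox phi C).

Lemma sub_Clos f : C f -> Clos f.
Proof.
move=> Cf; exists (subst (args_subst (fun i : 'I_(bf_ar f) => Var i)) (phi f)).
split; first by apply: ML_op => // i; apply: ML_var.
apply/(L_taut L_normal)/taut_iff => v.
by rewrite defining_args_subst // defining_eval.
Qed.

Lemma Clos_clone : clone Clos.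
Proof.
split=> [n hn i|f m hm g [p [MLp Lp]] Clos_g].
  exists (Var i); split; first exact: ML_var.
  by apply/(L_taut L_normal)/taut_iff => v; rewrite defining_eval // !ffunE.
have [q gq] := fin_all_exists Clos_g.
pose S := args_subst (fun i => phi (mkBF (g i) hm)).
exists (subst (args_subst q) p); split.
  apply: ML_subst => // k; rewrite /args_subst; case: insub => [i|]; last exact: ML_var.
  by case: (gq i).
apply: (L_iff_trans L_normal (b := subst S (phi f))).
  apply/(L_taut L_normal)/taut_iff => v.
  rewrite defining_eval // defining_args_subst // ffunE.
  by congr (bf_fun f _); apply/ffunP => i; rewrite !ffunE defining_eval.
apply: (L_iff_trans L_normal (L_subst L_normal S Lp)).
apply: (L_subst_iff L_normal) => k; rewrite /S /args_subst; case: insub => [i|].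
  by case: (gq i).
exact: L_iff_refl.
Qed.

Lemma Clos_top n : hasBox -> L (box_iter n FBot) -> Clos bf_top.
Proof.
move=> h bot_n; exists (box_iter n (Var 0)); split.
  exact: ML_box_iter h (ML_var _ _ _ _ _).
apply: (L_iff_provable L_normal); last exact: L_box_iter_of_bot.
by apply: (L_taut L_normal) => v; rewrite defining_eval // ffunE.
Qed.

Lemma Clos_bot n : hasDia -> L (box_iter n FBot) -> Clos bf_bot.
Proof.
move=> h bot_n; exists (dia_iter n (Var 0)); split.
  exact: ML_dia_iter h (ML_var _ _ _ _ _).
apply: (L_iff_refutable L_normal); last exact: L_neg_dia_iter_of_bot.
by apply: (L_taut L_normal) => v /=; rewrite defining_eval // ffunE.
Qed.

End LowerBound.

(* Variables beyond the arity are read as x_0, so every variable denotes a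
   projection and no constant function is needed to interpret it. *)
Definition ord_of_nat n (hn : 0 < n) (k : nat) : 'I_n := odflt (Ordinal hn) (insub k).

Lemma ord_of_natE n (hn : 0 < n) (i : 'I_n) : ord_of_nat hn i = i.
Proof. by rewrite /ord_of_nat valK. Qed.

Definition point_fun (refl : bool) n (hn : 0 < n) (p : form) : BF :=
  mkBF [ffun x : {ffun 'I_n -> bool} =>
          eval_point refl (fun k => x (ord_of_nat hn k)) p] hn.

Section UpperBound.

Variables (refl hasDia hasBox : bool) (C D : bset) (phi : BF -> form).
Hypotheses (phi_def : defining phi) (D_clone : clone D) (sub_CD : forall g, C g -> D g).
Hypotheses (D_bot : hasDia -> ~~ refl -> D bf_bot) (D_top : hasBox -> ~~ refl -> D bf_top).

Lemma ML_point_fun n (hn : 0 < n) p : ML hasDia hasBox C phi p -> D (point_fun refl hn p).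
Proof.
elim=> [k|q h _ IH|q h _ IH|f psi Cf _ IH].
- exact: D_clone.1.
- case: refl D_bot IH => [_|Dbot _]; first exact.
  exact: clone_const (Dbot h isT).
- case: refl D_top IH => [_|Dtop _]; first exact.
  exact: clone_const (Dtop h isT).
- have := D_clone.2 f n hn _ (sub_CD Cf) IH.
  congr D; apply: mkBF_ext => x.
  rewrite !ffunE defining_args_subst //.
  by congr (bf_fun f _); apply/ffunP => i; rewrite !ffunE.
Qed.

Lemma Clos_sub L f : frame_validates (point_frame refl) L ->
  Clos L hasDia hasBox phi C f -> D f.
Proof.
case: f => n F hn valid [p [MLp Lp]].
have := ML_point_fun hn MLp; congr D; apply: mkBF_ext => x.
rewrite ffunE -(point_frame_iff valid Lp) defining_eval //=.
by congr (F _); apply/ffunP => i; rewrite !ffunE ord_of_natE.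
Qed.

End UpperBound.

Lemma DsetP (hasDia hasBox : bool) (C : bset) f : clone C ->
  Dset hasDia hasBox C f <->
  (forall D : bset, clone D -> (forall g, C g -> D g) ->
     (hasDia -> D bf_bot) -> (hasBox -> D bf_top) -> D f).
Proof.
move=> C_clone; split.
  case: hasDia; case: hasBox => /= Dset_f D D_clone CD Dbot Dtop; last exact: CD.
  - by apply: Dset_f => // g [/CD|[->|->]]; [|apply: Dtop|apply: Dbot].
  - by apply: Dset_f => // g [/CD|->]; [|apply: Dbot].
  - by apply: Dset_f => // g [/CD|->]; [|apply: Dtop].
case: hasDia; case: hasBox => /= min_f; last by apply: min_f.
- move=> D D_clone CD; apply: min_f => // [g Cg|_|_]; apply: CD.
  + by left.
  + by right; right.
  + by right; left.
- by move=> D D_clone CD; apply: min_f => // [g Cg|_]; apply: CD; [left|right].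
- by move=> D D_clone CD; apply: min_f => // [g Cg|_]; apply: CD; [left|right].
Qed.

Theorem theorem4p15 (L : form -> Prop) (phi : BF -> form)
    (hasDia hasBox : bool) (C : bset) :
  normal_logic L -> consistent L -> defining phi -> clone C ->
  (typeA L -> forall f, Clos L hasDia hasBox phi C f <-> C f) /\
  (typeB L -> forall f, Clos L hasDia hasBox phi C f <-> Dset hasDia hasBox C f) /\
  (typeC L -> (forall f, C f -> Clos L hasDia hasBox phi C f) /\
              (forall f, Clos L hasDia hasBox phi C f -> Dset hasDia hasBox C f)).
Proof.
move=> L_normal _ phi_def C_clone.
have sub_C_Clos : forall f, C f -> Clos L hasDia hasBox phi C f :=
  sub_Clos hasDia hasBox L_normal phi_def.
have Clos_sub_Dset : frame_validates R_bullet L ->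
    forall f, Clos L hasDia hasBox phi C f -> Dset hasDia hasBox C f.
  move=> valid f Clos_f; apply/DsetP => // D D_clone CD Dbot Dtop.
  by apply: (Clos_sub (refl := false)) valid Clos_f => // [/Dbot|/Dtop].
split; [|split].
- move=> valid f; split; last exact: sub_C_Clos.
  exact: (Clos_sub (refl := true)) valid.
- move=> [valid [n [_ bot_n]]] f; split; first exact: Clos_sub_Dset.
  move/DsetP=> /(_ C_clone _ (Clos_clone _ _ C L_normal phi_def)); apply.
  + exact: sub_C_Clos.
  + by move=> h; apply: Clos_bot bot_n.
  + by move=> h; apply: Clos_top bot_n.
- by move=> [valid _ _]; split; [exact: sub_C_Clos|exact: Clos_sub_Dset].
Qed.
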